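(* Let $\mathcal D$ be a distribution of $(x,y)\in\mathbb R^d\times\{-1,+1\}$ with $x$ having finite second moments, let $\lambda>0$, and let $w^*$ be a minimizer of $\mathcal L(w)=\mathbb E_{(x,y)\sim\mathcal D}[\max(0,1-yw^\top x)]+\frac{\lambda}{2}\|w\|_2^2$. Suppose the coordinates of $x$ are mutually independent conditionally on $y$. If a coordinate $i$ satisfies $\mathbb E[x_i\mid y=-1]=0=\mathbb E[x_i\mid y=1]$, then $w_i^*=0$. *)

From HB Require Import structures.
From mathcomp Require Import all_boot all_order all_algebra.
From mathcomp Require Import all_classical all_reals all_analysis.
Set Implicit Arguments. Unset Strict Implicit. Unset Printing Implicit Defensive.
Import Order.TTheory GRing.Theory Num.Theory.
Local Open Scope classical_set_scope.
Local Open Scope ring_scope.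

Section Defs.
Context (d0 : measure_display) (T : measurableType d0) (R : realType).
Context (P : probability T R).

Definition hinge {d : nat} (w : 'rV[R]_d) (x : 'rV[R]_d) (y : R) : R :=
  Num.max 0 (1 - y * \sum_(i < d) w 0 i * x 0 i).

Definition svm_loss {d : nat} (X : T -> 'rV[R]_d) (Y : T -> R) (lam : R)
  (w : 'rV[R]_d) : \bar R :=
  ((\int[P]_om (hinge w (X om) (Y om))%:E) +
   (lam / 2 * \sum_(i < d) w 0 i ^+ 2)%:E)%E.

(* P(A | Y = c), using the convention x / 0 = 0 *)
Definition condP (Y : T -> R) (c : R) (A : set T) : R :=
  fine (P (A `&` Y @^-1` [set c])) / fine (P (Y @^-1` [set c])).

(* E[Z | Y = c] = E[Z 1_{Y=c}] / P(Y = c), with the convention x / 0 = 0 *)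
Definition condE (Y : T -> R) (c : R) (Z : T -> R) : R :=
  fine (\int[P]_(om in Y @^-1` [set c]) (Z om)%:E) / fine (P (Y @^-1` [set c])).

Definition cond_indep_coords {d : nat} (X : T -> 'rV[R]_d) (Y : T -> R) (c : R) : Prop :=
  (0 < fine (P (Y @^-1` [set c])))%R ->
  forall B : 'I_d -> set R, (forall j, measurable (B j)) ->
    condP Y c [set om | forall j, B j (X om 0 j)] =
    \prod_(j < d) condP Y c [set om | B j (X om 0 j)].
End Defs.

From HB Require Import structures.
From mathcomp Require Import all_boot all_order all_algebra.
From mathcomp Require Import all_classical all_reals all_analysis.
From mathcomp Require Import ring lra.
From mathcomp Require Import measurable_realfun simple_functions measurable_fun_approximation.
Set Implicit Arguments. Unset Strict Implicit. Unset Printing Implicit Defensive.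
Import Order.TTheory GRing.Theory Num.Theory.
Import numFieldNormedType.Exports.
Import HBNNSimple.
Local Open Scope classical_set_scope.
Local Open Scope ring_scope.

(* Let wstar minimize E[max(0, 1 - Y w^T X)] + lam/2 ||w||^2, where Y = +-1,
   the coordinates of X are independent given Y, and E[X_i | Y = y] = 0 for
   y = +-1.  Let w' be wstar with its i-th entry replaced by 0.

   1. Since max(0, .) is convex, pointwise
        hinge(w') - wstar_i g <= hinge(wstar),  g = Y X_i 1{1 - Y w'^T X > 0}.
   2. The events {1 - y w'^T X > 0, Y = y} depend only on the coordinates
      other than i.  Conditional independence, extended from cylinder events
      to the sigma-algebra of those coordinates by Dynkin's pi-lambda theorem,
      makes the law of X_i on such an event proportional to its law on
      {Y = y}; hence X_i has zero mean on it, E[g] = 0, and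
      E[hinge(w')] <= E[hinge(wstar)].
   3. The regularizer of w' is smaller by lam/2 wstar_i^2, so wstar_i <> 0
      would contradict the minimality of wstar. *)

Section scaled_law.
Context d (T : measurableType d) (R : realType) (P : {measure set T -> \bar R}).
Variables (Z : T -> R) (mZ : measurable_fun setT Z).

Lemma integral_nnsfun_comp (E : set T) (mE : measurable E) (h : {nnsfun R >-> R}) :
  (\int[P]_(x in E) (h (Z x))%:E =
   \sum_(y \in range h) y%:E * P (E `&` Z @^-1` (h @^-1` [set y])))%E.
Proof.
under eq_integral do rewrite fimfunE -fsumEFin//.
rewrite ge0_integral_fsum//; last 2 first.
- move=> r; apply/measurable_EFinP; apply: measurable_funM => //.
  apply: (measurable_funS measurableT) => //.
  by apply: measurableT_comp => //; exact: measurable_indic.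
- by move=> n x _; rewrite EFinM nnfun_muleindic_ge0.
apply: eq_fsbigr => y _.
have mZy : measurable (Z @^-1` (h @^-1` [set y])).
  by rewrite -[X in measurable X]setTI; apply: mZ.
rewrite (integralZl_indic mE (fun k => Z @^-1` (h @^-1` [set k]))) //.
- by rewrite integral_indic // setIC.
- by move=> y0; rewrite preimage_nnfun0// preimage_set0.
Qed.

Variables (E1 E2 : set T) (mE1 : measurable E1) (mE2 : measurable E2).
Variables (a b : R).

Hypothesis scaled_law : forall B, measurable B ->
  (a%:E * P (E1 `&` Z @^-1` B) = b%:E * P (E2 `&` Z @^-1` B))%E.

(* The relation between the laws transfers to integrals of nonnegative
   functions of Z: first for simple functions, then by monotone convergence
   along the standard approximation by simple functions. *)
Lemma scaled_law_integral_ge0 (phi : R -> R) (mphi : measurable_fun setT phi)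
    (phi_ge0 : forall x, 0 <= phi x) :
  (a%:E * \int[P]_(x in E1) (phi (Z x))%:E =
   b%:E * \int[P]_(x in E2) (phi (Z x))%:E)%E.
Proof.
have mf : measurable_fun setT (EFin \o phi) by exact/measurable_EFinP.
pose f_ := nnsfun_approx measurableT mf.
have simple_case (h : {nnsfun R >-> R}) :
    (a%:E * \int[P]_(x in E1) (h (Z x))%:E =
     b%:E * \int[P]_(x in E2) (h (Z x))%:E)%E.
  rewrite (integral_nnsfun_comp mE1) (integral_nnsfun_comp mE2).
  have term_ge0 E y : measurable E ->
      (0 <= y%:E * P (E `&` Z @^-1` (h @^-1` [set y])))%E.
    move=> mE; case: (leP 0 y) => y0; first by rewrite mule_ge0.
    by rewrite preimage_nnfun0// preimage_set0 setI0 measure0 mule0.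
  rewrite (ge0_mule_fsumr _ _ (fun y => term_ge0 E1 y mE1)).
  rewrite (ge0_mule_fsumr _ _ (fun y => term_ge0 E2 y mE2)).
  apply: eq_fsbigr => y _; rewrite muleCA scaled_law; first by rewrite muleCA.
  exact: measurable_funPTI.
have mf_ E n : measurable_fun E (fun x => (f_ n (Z x))%:E).
  by apply/measurable_EFinP; apply: measurableT_comp => //; exact: measurable_funTS.
have f_nd x m n : (m <= n)%N -> (f_ m x <= f_ n x)%R.
  by move=> mn; exact/lefP/nd_nnsfun_approx.
have limE E (mE : measurable E) :
    (\int[P]_(x in E) (phi (Z x))%:E =
     limn (fun n => \int[P]_(x in E) (f_ n (Z x))%:E))%E.
  rewrite -monotone_convergence//=.
  - apply: eq_integral => x _; apply/esym/cvg_lim => //=.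
    exact: (@cvg_nnsfun_approx _ _ _ _ measurableT _ mf (fun x _ => phi_ge0 x) (Z x)).
  - by move=> n x _; rewrite lee_fin.
  - by move=> x _ m n mn; rewrite lee_fin; exact: f_nd.
have cvgE E (mE : measurable E) :
    cvgn (fun n => \int[P]_(x in E) (f_ n (Z x))%:E)%E.
  apply/ereal_nondecreasing_is_cvgn => m n mn; apply: ge0_le_integral => //.
  - by move=> x _; rewrite lee_fin.
  - by move=> x _; rewrite lee_fin; exact: f_nd.
rewrite (limE _ mE1) (limE _ mE2) -!limeMl//; [|exact: cvgE..].
by congr (limn _); apply/funext => n; exact: simple_case.
Qed.

Lemma scaled_law_integral
    (iZ1 : P.-integrable E1 (fun x => (Z x)%:E))
    (iZ2 : P.-integrable E2 (fun x => (Z x)%:E)) :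
  (a%:E * \int[P]_(x in E1) (Z x)%:E = b%:E * \int[P]_(x in E2) (Z x)%:E)%E.
Proof.
have posE E : (\int[P]_(x in E) (fun x => (Z x)%:E)^\+ x =
    \int[P]_(x in E) (Num.max (Z x) 0)%:E)%E.
  by apply: eq_integral => x _; rewrite funeposE EFin_max.
have negE E : (\int[P]_(x in E) (fun x => (Z x)%:E)^\- x =
    \int[P]_(x in E) (Num.max (- Z x) 0)%:E)%E.
  by apply: eq_integral => x _; rewrite funenegE EFin_max EFinN.
have [mpos mneg] : measurable_fun setT (fun x : R => Num.max x 0) /\
    measurable_fun setT (fun x : R => Num.max (- x) 0).
  by split; apply: measurable_maxr => //; exact: measurableT_comp.
have [pos_ge0 neg_ge0] : (forall x : R, 0 <= Num.max x 0) /\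
    (forall x : R, 0 <= Num.max (- x) 0).
  by split=> x; rewrite le_max lexx orbT.
have negN_fin E : measurable E -> P.-integrable E (fun x => (Z x)%:E) ->
    (- \int[P]_(x in E) (Num.max (- Z x) 0)%:E)%E \is a fin_num.
  by move=> mE iZ; rewrite fin_numN -negE; exact: integrable_neg_fin_num.
rewrite [in LHS]integralE [in RHS]integralE !posE !negE.
rewrite muleBr ?fin_num_adde_defl ?negN_fin //.
rewrite [in RHS]muleBr ?fin_num_adde_defl ?negN_fin //.
by rewrite (scaled_law_integral_ge0 mpos) // (scaled_law_integral_ge0 mneg).
Qed.

End scaled_law.

Section probability_fine.
Context d (T : measurableType d) (R : realType) (P : probability T R).

Lemma fine_measureD (U V : set T) : measurable U -> measurable V -> V `<=` U ->
  fine (P (U `\` V)) = fine (P U) - fine (P V).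
Proof.
move=> mU mV VU; rewrite measureD//; last first.
  by rewrite (le_lt_trans (probability_le1 P mU))// ltry.
by rewrite setIidr// fineB// fin_num_measure.
Qed.

Lemma fine_measure_ndseq_cvg (F : (set T)^nat) (W : set T) :
  (forall n, measurable (F n)) -> nondecreasing_seq F -> measurable W ->
  (fun n => fine (P (F n `&` W))) @ \oo --> fine (P ((\bigcup_n F n) `&` W)).
Proof.
move=> mF ndF mW; apply: fine_cvg; rewrite fineK; last first.
  by apply: fin_num_measure; apply: measurableI => //; exact: bigcup_measurable.
rewrite setI_bigcupl; apply: (nondecreasing_cvg_mu (mu := P)).
- by move=> n; exact: measurableI.
- by apply: bigcup_measurable => n _; exact: measurableI.
- by move=> m n mn; apply/subsetPset; apply: setSI; exact/subsetPset/ndF.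
Qed.

End probability_fine.

Section coordinate_independence.
Context d (T : measurableType d) (R : realType) (P : probability T R).
Variables (n : nat) (X : T -> 'rV[R]_n) (Y : T -> R) (c : R) (i : 'I_n).
Hypotheses (mX : forall j, measurable_fun setT (fun om => X om 0 j))
  (mY : measurable_fun setT Y).

(* Cylinder events constraining every coordinate of X except the i-th; they
   generate the sigma-algebra of the "other" coordinates. *)
Definition others_rect : set (set T) :=
  [set A | exists B : 'I_n -> set R, (forall j, measurable (B j)) /\
     B i = setT /\ A = [set om | forall j, B j (X om 0 j)]].

(* A is measurable and, conditionally on Y = c, independent of every event
   {X_i \in S}; the product form also makes sense when P(Y = c) = 0. *)
Definition indep_of_coord (A : set T) : Prop :=
  measurable A /\ forall S, measurable S ->
  fine (P ((A `&` [set om | S (X om 0 i)]) `&` Y @^-1` [set c])) *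
    fine (P (Y @^-1` [set c])) =
  fine (P (A `&` Y @^-1` [set c])) *
    fine (P ([set om | S (X om 0 i)] `&` Y @^-1` [set c])).

Lemma measurable_Yc : measurable (Y @^-1` [set c]).
Proof. by rewrite -[X in measurable X]setTI; apply: mY. Qed.

Lemma measurable_coord (S : set R) (j : 'I_n) :
  measurable S -> measurable [set om | S (X om 0 j)].
Proof. by move=> mS; rewrite -[X in measurable X]setTI; apply: (mX j). Qed.

Lemma measurable_rect (B : 'I_n -> set R) : (forall j, measurable (B j)) ->
  measurable [set om | forall j, B j (X om 0 j)].
Proof.
move=> mB.
have -> : [set om | forall j, B j (X om 0 j)] =
    \bigcap_(j in [set: 'I_n]) [set om | B j (X om 0 j)].
  by apply/seteqP; split => om /= H j; [move=> _; exact: H|exact: H].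
by apply: fin_bigcap_measurable => // j _; exact: measurable_coord.
Qed.

Lemma others_rect_setI_closed : setI_closed others_rect.
Proof.
move=> A B [BA [mA [HA ->]]] [BB [mB [HB ->]]].
exists (fun j => BA j `&` BB j); split; first by move=> j; exact: measurableI.
split; first by rewrite HA HB setIid.
by apply/seteqP; split => om /=;
  [move=> [h1 h2] j; split|move=> h; split => j; have [] := h j].
Qed.

Lemma indep_of_coordT : indep_of_coord setT.
Proof. by split => // S mS; rewrite !setTI mulrC. Qed.

Lemma indep_of_coord_setSD : setSD_closed indep_of_coord.
Proof.
move=> A B BA [mA HA] [mB HB]; split; first exact: measurableD.
move=> S mS.
have mXS := measurable_coord i mS.
have DS : (A `\` B) `&` [set om | S (X om 0 i)] `&` Y @^-1` [set c] =
    (A `&` [set om | S (X om 0 i)] `&` Y @^-1` [set c]) `\`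
    (B `&` [set om | S (X om 0 i)] `&` Y @^-1` [set c]).
  apply/seteqP; split => om /=.
  - by move=> [[[Ao nBo] So] Yo]; split => // -[[]].
  - by move=> [[[Ao So] Yo] H]; do 3!split => //; move=> Bo; apply: H.
have DY : (A `\` B) `&` Y @^-1` [set c] =
    (A `&` Y @^-1` [set c]) `\` (B `&` Y @^-1` [set c]).
  apply/seteqP; split => om /=.
  - by move=> [[Ao nBo] Yo]; split => // -[].
  - by move=> [[Ao Yo] H]; do 2!split => //; move=> Bo; apply: H.
have mYc := measurable_Yc.
rewrite DS DY !fine_measureD; first last.
- by do 2 apply: setSI.
- by repeat apply: measurableI.
- by repeat apply: measurableI.
- exact: setSI.
- exact: measurableI.
- exact: measurableI.
by rewrite !mulrBl HA // HB.
Qed.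

Lemma indep_of_coord_ndseq : ndseq_closed indep_of_coord.
Proof.
move=> F ndF HF; have mF k : measurable (F k) by case: (HF k).
split; first by apply: bigcup_measurable => k _.
move=> S mS.
have mYc := measurable_Yc.
have cvg_S := fine_measure_ndseq_cvg (P := P) mF ndF
  (measurableI _ _ (measurable_coord i mS) mYc).
have cvg_Y := fine_measure_ndseq_cvg (P := P) mF ndF mYc.
have seqE : (fun k => fine (P (F k `&` ([set om | S (X om 0 i)] `&`
      Y @^-1` [set c]))) * fine (P (Y @^-1` [set c]))) =
    (fun k => fine (P (F k `&` Y @^-1` [set c])) *
      fine (P ([set om | S (X om 0 i)] `&` Y @^-1` [set c]))).
  by apply/funext => k; rewrite setIA; case: (HF k) => _ ->.
have := cvg_lim (@Rhausdorff R) (cvgMr_tmp (b := fine (P (Y @^-1` [set c]))) cvg_S).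
have := cvg_lim (@Rhausdorff R) (cvgMr_tmp
  (b := fine (P ([set om | S (X om 0 i)] `&` Y @^-1` [set c]))) cvg_Y).
by rewrite -setIA seqE => <- <-.
Qed.

Lemma others_sigma_measurable (A : set T) : <<s others_rect >> A -> measurable A.
Proof.
apply: smallest_sub; first exact: sigma_algebra_measurable.
by move=> B [Bf [mB [_ ->]]]; exact: measurable_rect.
Qed.

Section conditional_independence.
Hypothesis indep : cond_indep_coords P X Y c.
Hypothesis PYc_gt0 : 0 < fine (P (Y @^-1` [set c])).

Lemma indep_of_coord_rect : others_rect `<=` indep_of_coord.
Proof.
move=> _ [B [mB [Bi ->]]]; split; first exact: measurable_rect.
move=> S mS.
pose B' j := if j == i then S else B j.
have mB' j : measurable (B' j) by rewrite /B'; case: ifP.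
have rectB' : [set om | forall j, B' j (X om 0 j)] =
    [set om | forall j, B j (X om 0 j)] `&` [set om | S (X om 0 i)].
  apply/seteqP; split => om /=.
  - move=> H; split; last by have := H i; rewrite /B' eqxx.
    move=> j; case: (eqVneq j i) => [->|ji]; first by rewrite Bi.
    by have := H j; rewrite /B' (negbTE ji).
  - move=> [H1 H2] j; rewrite /B'; case: (eqVneq j i) => [->//|ji].
    exact: H1.
have hB' := indep PYc_gt0 mB'; have hB := indep PYc_gt0 mB.
rewrite (bigD1 i) //= in hB'; rewrite (bigD1 i) //= in hB.
move: hB'; rewrite rectB' /B' eqxx.
under eq_bigr => j ji do rewrite (negbTE ji).
have BiT : [set om | B i (X om 0 i)] = setT by rewrite Bi.
move: hB; rewrite BiT /condP setTI.
set Pi := \prod_(j < n | j != i) _.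
set al := fine (P (Y @^-1` [set c])).
have al_neq0 : al != 0 by rewrite gt_eqF.
rewrite divff // mul1r => hB hB'.
have mulK x y : x / al = y -> x = y * al by move=> <-; rewrite divfK.
by rewrite (mulK _ _ hB) (mulK _ _ hB'); field.
Qed.

Lemma indep_of_coord_sigma : <<s others_rect >> `<=` indep_of_coord.
Proof.
apply: lambda_system_subset => //.
- exact: others_rect_setI_closed.
- split => //; [exact: indep_of_coordT|exact: indep_of_coord_setSD|].
  exact: indep_of_coord_ndseq.
- exact: indep_of_coord_rect.
Qed.

End conditional_independence.

Lemma others_halfspace (w : 'rV[R]_n) (y : R) : w 0 i = 0 ->
  <<s others_rect >> [set om | 0 < 1 - y * \sum_(j < n) w 0 j * X om 0 j].
Proof.
move=> wi0.
pose TG := g_sigma_algebraType others_rect.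
have mXj j : j != i -> measurable_fun (setT : set TG) (fun om : TG => X om 0 j).
  move=> ji _ U mU; apply: sub_sigma_algebra.
  exists (fun k => if k == j then U else setT); split; first by move=> k; case: ifP.
  split; first by rewrite eq_sym (negbTE ji).
  apply/seteqP; split => om /=.
  - by move=> [_ h] k; case: ifP => // /eqP ->.
  - by move=> h; split => //; have := h j; rewrite eqxx.
have mterm j : measurable_fun (setT : set TG) (fun om : TG => w 0 j * X om 0 j).
  case: (eqVneq j i) => [->|ji].
    by rewrite wi0; under eq_fun do rewrite mul0r; exact: measurable_cst.
  by apply: measurable_funM => //; exact: mXj.
have mlin : measurable_fun (setT : set TG)
    (fun om : TG => 1 - y * \sum_(j < n) w 0 j * X om 0 j).
  apply: measurable_funB => //; apply: measurable_funM => //.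
  by apply: measurable_sum => j; exact: mterm.
have := mlin measurableT _ (measurable_itv `]0, +oo[).
rewrite setTI; congr (_ _).
by apply/seteqP; split => om /=; rewrite in_itv /= andbT.
Qed.

Lemma integral_coord_others_eq0 (indep : cond_indep_coords P X Y c)
    (intXi : P.-integrable setT (fun om => (X om 0 i)%:E))
    (mean0 : condE P Y c (fun om => X om 0 i) = 0)
    (A : set T) : <<s others_rect >> A ->
  (\int[P]_(om in A `&` Y @^-1` [set c]) (X om 0%R i)%:E = 0)%E.
Proof.
move=> sA; have mA := others_sigma_measurable sA; have mYc := measurable_Yc.
have mAY : measurable (A `&` Y @^-1` [set c]) by exact: measurableI.
have intXi_on E : measurable E -> P.-integrable E (fun om => (X om 0 i)%:E).
  by move=> mE; exact: integrableS intXi.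
set al := fine (P (Y @^-1` [set c])).
have PYcE : P (Y @^-1` [set c]) = al%:E by rewrite fineK// fin_num_measure.
have al_ge0 : 0 <= al by rewrite fine_ge0.
have [al_eq0|al_gt0] : al = 0 \/ 0 < al.
  by move: al_ge0; rewrite le_eqVlt => /orP[/eqP <-|->]; [left|right].
  apply: null_set_integral => //.
    by apply/measurable_EFinP; exact: measurable_funTS.
  apply/eqP; rewrite eq_le measure_ge0 andbT.
  by rewrite -[leRHS]/(0%:E) -al_eq0 -PYcE le_measure// ?inE//; exact: subIsetr.
have [_ indA] := indep_of_coord_sigma indep al_gt0 sA.
set b := fine (P (A `&` Y @^-1` [set c])).
have law (B : set R) : measurable B ->
    (al%:E * P ((A `&` Y @^-1` [set c]) `&` (fun om => X om 0%R i) @^-1` B) =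
     b%:E * P (Y @^-1` [set c] `&` (fun om => X om 0%R i) @^-1` B))%E.
  move=> mB; have mXB := measurable_coord i mB.
  have -> : (A `&` Y @^-1` [set c]) `&` (fun om => X om 0%R i) @^-1` B =
      (A `&` [set om | B (X om 0%R i)]) `&` Y @^-1` [set c] by rewrite setIAC.
  have -> : Y @^-1` [set c] `&` (fun om => X om 0%R i) @^-1` B =
      [set om | B (X om 0%R i)] `&` Y @^-1` [set c] by rewrite setIC.
  rewrite -(fineK (fin_num_measure P _ (measurableI _ _ (measurableI _ _ mA mXB) mYc))).
  rewrite -(fineK (fin_num_measure P _ (measurableI _ _ mXB mYc))).
  by rewrite -!EFinM mulrC indA.
have int_Yc0 : (\int[P]_(om in Y @^-1` [set c]) (X om 0%R i)%:E = 0)%E.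
  rewrite -[LHS]fineK; last exact: integrable_fin_num (intXi_on _ mYc).
  move: mean0; rewrite /condE -/al => /eqP.
  by rewrite mulf_eq0 invr_eq0 (gt_eqF al_gt0) orbF => /eqP ->.
have := scaled_law_integral (mX i) mAY mYc law
  (intXi_on _ mAY) (intXi_on _ mYc).
rewrite int_Yc0 mule0 => /eqP; rewrite mule_eq0 eqe (gt_eqF al_gt0) /=.
by move/eqP.
Qed.

End coordinate_independence.

Section hinge_coordinate.
Context (R : realType) (n : nat).

Lemma max0_subgradient (u t : R) :
  Num.max 0 u - t * (if 0 < u then 1 else 0) <= Num.max 0 (u - t).
Proof.
case: ltP => u_gt0; first by rewrite mulr1 le_max lexx orbT.
by rewrite mulr0 subr0 le_max lexx.
Qed.

Definition drop_coord (w : 'rV[R]_n) (i : 'I_n) : 'rV[R]_n :=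
  \row_j (if j == i then 0 else w 0 j).

Lemma drop_coord_at (w : 'rV[R]_n) (i : 'I_n) : drop_coord w i 0 i = 0.
Proof. by rewrite mxE eqxx. Qed.

Lemma sum_drop_coord (F : 'I_n -> R -> R) (w : 'rV[R]_n) (i : 'I_n) :
  (forall j, F j 0 = 0) ->
  \sum_(j < n) F j (w 0 j) = \sum_(j < n) F j (drop_coord w i 0 j) + F i (w 0 i).
Proof.
move=> F0; rewrite (bigD1 i) //= [in RHS](bigD1 i) //= drop_coord_at F0 add0r addrC.
by congr (_ + _); apply: eq_bigr => j ji; rewrite mxE (negbTE ji).
Qed.

Lemma hinge_drop_coord (w x : 'rV[R]_n) (y : R) (i : 'I_n) :
  hinge (drop_coord w i) x y -
    w 0 i * (y * x 0 i * (if 0 < 1 - y * \sum_(j < n) drop_coord w i 0 j * x 0 j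
                          then 1 else 0))
  <= hinge w x y.
Proof.
rewrite /hinge (sum_drop_coord (F := fun j v => v * x 0 j) w i); last by move=> j; rewrite mul0r.
set s := \sum_(j < n) _; set b := if _ then _ else _.
have -> : w 0 i * (y * x 0 i * b) = y * (w 0 i * x 0 i) * b by ring.
by rewrite mulrDr opprD addrA; exact: max0_subgradient.
Qed.

End hinge_coordinate.

Section expected_hinge.
Context d (T : measurableType d) (R : realType) (P : probability T R).
Variables (n : nat) (X : T -> 'rV[R]_n) (Y : T -> R).
Hypotheses (mX : forall j, measurable_fun setT (fun om => X om 0 j))
  (mY : measurable_fun setT Y) (Ypm : forall om, Y om = 1 \/ Y om = -1)
  (intX : forall j, P.-integrable setT (fun om => (X om 0 j)%:E)).

Lemma integrable_of_sqr (f : T -> R) (mf : measurable_fun setT f) :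
  P.-integrable setT (fun om => (f om ^+ 2)%:E) ->
  P.-integrable setT (fun om => (f om)%:E).
Proof.
move=> int_f2.
apply: (@le_integrable _ _ _ _ _ measurableT _ (fun om => (1 + f om ^+ 2)%:E)).
- exact/measurable_EFinP.
- move=> x _; rewrite !abse_EFin lee_fin; apply: le_trans (ler_norm _).
  by case: (ger0P (f x)) => _; nra.
- apply: (eq_integrable measurableT (fun om => (EFin \o cst 1) om + (f om ^+ 2)%:E)).
    by move=> x _; rewrite /= EFinD.
  exact: integrableD (finite_measure_integrable_cst _ _ _) int_f2.
Qed.

Lemma hinge_integrable (w : 'rV[R]_n) :
  P.-integrable setT (fun om => (hinge w (X om) (Y om))%:E).
Proof.
apply: (@le_integrable _ _ _ _ _ measurableT _
   (fun om => (1 + \sum_(j < n) `|w 0 j| * `|X om 0 j|)%:E)).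
- apply/measurable_EFinP; apply: measurable_maxr => //.
  apply: measurable_funB => //; apply: measurable_funM => //.
  by apply: measurable_sum => j; exact: measurable_funM.
- move=> om _; rewrite !abse_EFin lee_fin; apply: le_trans (ler_norm _).
  have Y_norm1 : `|Y om| = 1 by case: (Ypm om) => ->; rewrite ?normrN normr1.
  apply: (@le_trans _ _ (1 + `|\sum_(j < n) w 0 j * X om 0 j|)).
    apply: (@le_trans _ _ `|1 - Y om * \sum_(j < n) w 0 j * X om 0 j|).
      by rewrite /hinge /Num.max; case: ifP => _; rewrite ?normr0 ?normr_ge0.
    by apply: le_trans (ler_normB _ _) _; rewrite normr1 normrM Y_norm1 mul1r.
  rewrite lerD2l; apply: le_trans (ler_norm_sum _ _ _) _.
  by apply: ler_sum => j _; rewrite normrM.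
- have int_sum := @integrable_sum _ _ _ P _ measurableT _ (index_enum 'I_n) predT
    (fun j om => (`|w 0 j|%:E * `|(X om 0%R j)%:E|)%E)
    (fun j _ => integrableZl measurableT `|w 0 j| (integrable_abse (intX j))).
  have := integrableD measurableT (finite_measure_integrable_cst P 1 measurableT) int_sum.
  apply: eq_integrable => // om _.
  by rewrite /= EFinD -sumEFin; congr (_ + _)%E;
    apply: eq_bigr => j _; rewrite abse_EFin EFinM.
Qed.

Section subgradient.
Variables (i : 'I_n) (w : 'rV[R]_n).

Definition hinge_subgrad (om : T) : R :=
  Y om * X om 0 i * (if 0 < 1 - Y om * \sum_(j < n) w 0 j * X om 0 j then 1 else 0).

Hypothesis wi0 : w 0 i = 0.
Hypothesis indep : forall c, c = 1 \/ c = -1 -> cond_indep_coords P X Y c.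
Hypotheses (mean0_neg : condE P Y (-1) (fun om => X om 0 i) = 0)
  (mean0_pos : condE P Y 1 (fun om => X om 0 i) = 0).

(* When w ignores coordinate i, the subgradient component is X_i restricted
   to events on the other coordinates and on Y; it is integrable with mean 0. *)
Lemma hinge_subgrad_mean0 :
  P.-integrable setT (fun om => (hinge_subgrad om)%:E) /\
  (\int[P]_om (hinge_subgrad om)%:E = 0)%E.
Proof.
have one_neq : (1 : R) != -1 by apply/eqP => h; lra.
pose H (y : R) := [set om | 0 < 1 - y * \sum_(j < n) w 0 j * X om 0 j] `&`
  Y @^-1` [set y].
have sH y : <<s others_rect X i >> [set om | 0 < 1 - y * \sum_(j < n) w 0 j * X om 0 j].
  exact: others_halfspace.
have mH y : measurable (H y).
  by apply: measurableI; [exact: others_sigma_measurable (sH y)|exact: measurable_Yc].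
have int_H1 : (\int[P]_(om in H 1%R) (X om 0%R i)%:E = 0)%E :=
  integral_coord_others_eq0 mX mY (@indep 1 (or_introl erefl)) (intX i)
    mean0_pos (sH 1).
have int_Hm1 : (\int[P]_(om in H (-1)%R) (X om 0%R i)%:E = 0)%E :=
  integral_coord_others_eq0 mX mY (@indep (-1) (or_intror erefl)) (intX i)
    mean0_neg (sH (-1)).
have memH y om : (om \in H y) =
    (0 < 1 - y * \sum_(j < n) w 0 j * X om 0 j) && (Y om == y).
  apply/idP/andP => [/set_mem [/= pos /= ->]//|[pos /eqP Yy]].
  by apply/mem_set; split.
have subgradE om : hinge_subgrad om =
    (if om \in H 1 then X om 0 i else 0) - (if om \in H (-1) then X om 0 i else 0).
  rewrite /hinge_subgrad !memH; case: (Ypm om) => ->.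
  - rewrite eqxx (negbTE one_neq) andbT andbF.
    by case: ifP => _; ring.
  - rewrite eqxx eq_sym (negbTE one_neq) andbT andbF.
    by case: ifP => _; ring.
pose fX om := (X om 0%R i)%:E.
have subgrad_patch : (fun om => (hinge_subgrad om)%:E) =
    (fun om => (fX \_ (H 1%R) om - fX \_ (H (-1)%R) om)%E).
  apply/funext => om; rewrite /= subgradE EFinB /patch /fX.
  by case: ifP => _; case: ifP => _.
have int_patch y : P.-integrable setT (fX \_ (H y)).
  exact: (integrable_mkcond _ (mH y)).1 (integrableS measurableT (mH y) (subsetT _) (intX i)).
rewrite subgrad_patch; split; first exact: integrableB.
by rewrite integralB// -!integral_mkcond int_H1 int_Hm1 sube0.
Qed.

End subgradient.

(* Dropping coordinate i does not increase the expected hinge loss: pointwise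
   the increase is at most v_i times the subgradient component, whose mean is
   zero. *)
Lemma expected_hinge_drop_coord (i : 'I_n) (v : 'rV[R]_n)
    (indep : forall c, c = 1 \/ c = -1 -> cond_indep_coords P X Y c)
    (mean0_neg : condE P Y (-1) (fun om => X om 0 i) = 0)
    (mean0_pos : condE P Y 1 (fun om => X om 0 i) = 0) :
  (\int[P]_om (hinge (drop_coord v i) (X om) (Y om))%:E <=
   \int[P]_om (hinge v (X om) (Y om))%:E)%E.
Proof.
have [int_g int_g0] :=
  hinge_subgrad_mean0 (drop_coord_at v i) indep mean0_neg mean0_pos.
have int_vg : P.-integrable setT
    (fun om => ((v 0 i)%:E * (hinge_subgrad i (drop_coord v i) om)%:E)%E).
  exact: integrableZl.
have hle : (\int[P]_om ((hinge (drop_coord v i) (X om) (Y om))%:E -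
      (v 0 i)%:E * (hinge_subgrad i (drop_coord v i) om)%:E) <=
    \int[P]_om (hinge v (X om) (Y om))%:E)%E.
  apply: le_integral => //; [|exact: hinge_integrable|].
  - by apply: integrableB => //; exact: hinge_integrable.
  - by move=> om _; rewrite -EFinM -EFinB lee_fin; exact: hinge_drop_coord.
rewrite integralB // in hle; [|exact: hinge_integrable].
by rewrite (integralZl measurableT int_g) int_g0 mule0 sube0 in hle.
Qed.

End expected_hinge.

Unset Implicit Arguments.

Theorem mainTheorem2 (d0 : measure_display) (T : measurableType d0)
  (R : realType) (P : probability T R) (d : nat)
  (X : T -> 'rV[R]_d) (Y : T -> R)
  (mX : forall i : 'I_d, measurable_fun setT (fun om => X om 0 i))
  (mY : measurable_fun setT Y)
  (Ypm : forall om, Y om = 1 \/ Y om = -1)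
  (X2 : forall i : 'I_d, P.-integrable setT (fun om => (X om 0 i ^+ 2)%:E))
  (lam : R) (lam_gt0 : 0 < lam)
  (wstar : 'rV[R]_d)
  (wstar_min : forall w : 'rV[R]_d,
     (svm_loss P X Y lam wstar <= svm_loss P X Y lam w)%E)
  (indep : forall c : R, (c = 1 \/ c = -1) -> cond_indep_coords P X Y c)
  (i : 'I_d)
  (hi : condE P Y (-1) (fun om => X om 0 i) = 0 /\
        condE P Y 1 (fun om => X om 0 i) = 0) :
  wstar 0 i = 0.
Proof.
apply/eqP/negPn/negP => wi_neq0.
have intX j : P.-integrable setT (fun om => (X om 0 j)%:E).
  exact: integrable_of_sqr (mX j) (X2 j).
have int_hinge (w : 'rV[R]_d) := hinge_integrable mX mY Ypm intX w.
(* E[hinge(w')] <= E[hinge(wstar)] while the regularizer drops strictly. *)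
have := expected_hinge_drop_coord mX mY Ypm intX wstar indep hi.1 hi.2.
have := wstar_min (drop_coord wstar i); rewrite /svm_loss.
rewrite -(fineK (integrable_fin_num measurableT (int_hinge wstar))).
rewrite -(fineK (integrable_fin_num measurableT (int_hinge (drop_coord wstar i)))).
rewrite -!EFinD !lee_fin (sum_drop_coord (F := fun _ x => x ^+ 2) wstar i);
  last by move=> _; rewrite expr0n.
have reg_gt0 : 0 < lam / 2 * wstar 0 i ^+ 2.
  by rewrite mulr_gt0 ?divr_gt0 // exprn_even_gt0.
rewrite mulrDr; lra.
Qed.
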